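(* (a) For all $A,B\in\mathcal Q^{\vartriangle}$, $$A-^{\vartriangle}B=\bigcap_{z^*\in C^-\setminus\{0\}}\{z\in Z:\ \sigma^{\vartriangle}_A(z^* )-^{\vartriangle}\sigma^{\vartriangle}_B(z^* )\leq -z^*(z)\}.$$ If moreover $A=\{z\in Z: \sigma^{\vartriangle}_A(z^* )\leq -z^*(z)\}$ for some $z^*\in C^-\setminus\{0\}$, then $A-^{\vartriangle}B=\{z\in Z: \sigma^{\vartriangle}_A(z^* )-^{\vartriangle}\sigma^{\vartriangle}_B(z^* )\leq -z^*(z)\}$. (b) For all $A,B\in\mathcal Q^{\triangledown}$, $$A-^{\triangledown}B=\bigcap_{z^*\in C^-\setminus\{0\}}\{z\in Z:\ -z^*(z)\leq\sigma^{\triangledown}_A(z^* )-^{\triangledown}\sigma^{\triangledown}_B(z^* )\}.$$ If moreover $A=\{z\in Z: -z^*(z)\leq\sigma^{\triangledown}_A(z^* )\}$ for some $z^*\in C^-\setminus\{0\}$, then $A-^{\triangledown}B=\{z\in Z: -z^*(z)\leq\sigma^{\triangledown}_A(z^* )-^{\triangledown}\sigma^{\triangledown}_B(z^* )\}$.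
   Context: $Z$ is a separated locally convex space with dual $Z^*$; $C\subseteq Z$ is a convex cone with $0\in C$, and $C^-=\{z^*\in Z^*: z^*(z)\leq0\ \forall z\in C\}$, assumed to satisfy $C^-\neq\{0\}$. $\mathcal Q^{\vartriangle}=\{A\subseteq Z: A=\operatorname{cl}\operatorname{co}(A+C)\}$, $\mathcal Q^{\triangledown}=\{A\subseteq Z: A=\operatorname{cl}\operatorname{co}(A-C)\}$ (both contain $\emptyset$). Set differences: for $A,B\in\mathcal Q^{\vartriangle}$, $A-^{\vartriangle}B=\{z\in Z: B+\{z\}\subseteq A\}$; for $A,B\in\mathcal Q^{\triangledown}$, $A-^{\triangledown}B=\{z\in Z: B+\{z\}\subseteq A\}$. Support-type functions: $\sigma^{\vartriangle}_D(z^* )=\inf_{z\in D}(-z^*(z))$, $\sigma^{\triangledown}_D(z^* )=\sup_{z\in D}(-z^*(z))$ (with $\inf\emptyset=+\infty$, $\sup\emptyset=-\infty$). On $\overline{\mathbb R}=\mathbb R\cup\{\pm\infty\}$: inf-addition $r+^{\vartriangle}s=\inf\{a+b: a,b\in\mathbb R, r\leq a, s\leq b\}$, sup-addition $r+^{\triangledown}s=\sup\{a+b: a,b\in\mathbb R, a\leq r, b\leq s\}$, inf-difference $r-^{\vartriangle}s=\min\{t: r\leq s+^{\vartriangle}t\}$, sup-difference $r-^{\triangledown}s=\max\{t: s+^{\triangledown}t\leq r\}$. *)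

From Stdlib Require Import Reals Lra Classical ClassicalEpsilon.
Open Scope R_scope.

Record LCS := {
  car :> Type;
  zzero : car;
  zadd : car -> car -> car;
  zopp : car -> car;
  zscal : R -> car -> car;
  zadd_assoc : forall x y w, zadd x (zadd y w) = zadd (zadd x y) w;
  zadd_comm : forall x y, zadd x y = zadd y x;
  zadd_0 : forall x, zadd x zzero = x;
  zadd_opp : forall x, zadd x (zopp x) = zzero;
  zscal_assoc : forall a b x, zscal a (zscal b x) = zscal (a * b) x;
  zscal_1 : forall x, zscal 1 x = x;
  zscal_distr_l : forall a x y, zscal a (zadd x y) = zadd (zscal a x) (zscal a y);
  zscal_distr_r : forall a b x, zscal (a + b) x = zadd (zscal a x) (zscal b x);
  zopen : (car -> Prop) -> Prop;
  zopen_full : zopen (fun _ => True);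
  zopen_inter : forall U V, zopen U -> zopen V -> zopen (fun x => U x /\ V x);
  zopen_union : forall F : (car -> Prop) -> Prop,
      (forall U, F U -> zopen U) -> zopen (fun x => exists U, F U /\ U x);
  zadd_cont : forall x y U, zopen U -> U (zadd x y) ->
      exists V W, zopen V /\ zopen W /\ V x /\ W y /\
        forall x' y', V x' -> W y' -> U (zadd x' y');
  zscal_cont : forall r x U, zopen U -> U (zscal r x) ->
      exists eps, 0 < eps /\ exists V, zopen V /\ V x /\
        forall s x', Rabs (s - r) < eps -> V x' -> U (zscal s x');
  zloc_convex : forall U, zopen U -> U zzero ->
      exists V, zopen V /\ V zzero /\
        (forall a b t, V a -> V b -> 0 <= t <= 1 ->
           V (zadd (zscal t a) (zscal (1 - t) b))) /\
        (forall x, V x -> U x);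
  zhausdorff : forall x y, x <> y ->
      exists U V, zopen U /\ zopen V /\ U x /\ V y /\ forall w, U w -> V w -> False
}.

Section Sets.
Context {Z : LCS}.

Definition convex_set (A : Z -> Prop) : Prop :=
  forall a b t, A a -> A b -> 0 <= t <= 1 -> A (zadd Z (zscal Z t a) (zscal Z (1 - t) b)).

Definition conv_hull (A : Z -> Prop) : Z -> Prop :=
  fun z => forall D, convex_set D -> (forall a, A a -> D a) -> D z.

Definition closure (A : Z -> Prop) : Z -> Prop :=
  fun z => forall U, zopen Z U -> U z -> exists a, U a /\ A a.

Definition set_add (A B : Z -> Prop) : Z -> Prop :=
  fun z => exists a b, A a /\ B b /\ z = zadd Z a b.
Definition set_sub (A B : Z -> Prop) : Z -> Prop :=
  fun z => exists a b, A a /\ B b /\ z = zadd Z a (zopp Z b).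

Definition convex_cone (C : Z -> Prop) : Prop :=
  convex_set C /\ (forall t z, 0 < t -> C z -> C (zscal Z t z)).

Definition is_linear (f : Z -> R) : Prop :=
  (forall x y, f (zadd Z x y) = f x + f y) /\ (forall a x, f (zscal Z a x) = a * f x).
Definition is_continuous (f : Z -> R) : Prop :=
  forall x eps, 0 < eps -> exists U, zopen Z U /\ U x /\ forall y, U y -> Rabs (f y - f x) < eps.
Definition in_dual (f : Z -> R) : Prop := is_linear f /\ is_continuous f.

Definition Cminus (C : Z -> Prop) (zs : Z -> R) : Prop :=
  in_dual zs /\ forall z, C z -> zs z <= 0.

(* Q^up = {A | A = cl co (A + C)},  Q^down = {A | A = cl co (A - C)} *)
Definition in_Q_inf (C A : Z -> Prop) : Prop :=
  forall z, A z <-> closure (conv_hull (set_add A C)) z.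
Definition in_Q_sup (C A : Z -> Prop) : Prop :=
  forall z, A z <-> closure (conv_hull (set_sub A C)) z.

Definition set_diff (A B : Z -> Prop) : Z -> Prop :=
  fun z => forall b, B b -> A (zadd Z b z).

End Sets.

Inductive Rbar := Fin (r : R) | PInf | MInf.

Definition Rbar_le (x y : Rbar) : Prop :=
  match x, y with
  | MInf, _ => True
  | _, PInf => True
  | Fin a, Fin b => a <= b
  | _, _ => False
  end.

(* infimum / supremum in Rbar of a set of reals (inf ∅ = +∞, sup ∅ = -∞) *)
Definition Rbar_is_glb (P : R -> Prop) (t : Rbar) : Prop :=
  (forall x, P x -> Rbar_le t (Fin x)) /\
  (forall u, (forall x, P x -> Rbar_le u (Fin x)) -> Rbar_le u t).
Definition Rbar_is_lub (P : R -> Prop) (t : Rbar) : Prop :=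
  (forall x, P x -> Rbar_le (Fin x) t) /\
  (forall u, (forall x, P x -> Rbar_le (Fin x) u) -> Rbar_le t u).

Definition Rbar_inf (P : R -> Prop) : Rbar := epsilon (inhabits PInf) (Rbar_is_glb P).
Definition Rbar_sup (P : R -> Prop) : Rbar := epsilon (inhabits MInf) (Rbar_is_lub P).

Definition Rbar_plus_inf (r s : Rbar) : Rbar :=
  Rbar_inf (fun x => exists a b, Rbar_le r (Fin a) /\ Rbar_le s (Fin b) /\ x = a + b).
Definition Rbar_plus_sup (r s : Rbar) : Rbar :=
  Rbar_sup (fun x => exists a b, Rbar_le (Fin a) r /\ Rbar_le (Fin b) s /\ x = a + b).

Definition Rbar_minus_inf (r s : Rbar) : Rbar :=
  epsilon (inhabits PInf) (fun t => Rbar_le r (Rbar_plus_inf s t) /\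
                          forall t', Rbar_le r (Rbar_plus_inf s t') -> Rbar_le t t').
Definition Rbar_minus_sup (r s : Rbar) : Rbar :=
  epsilon (inhabits MInf) (fun t => Rbar_le (Rbar_plus_sup s t) r /\
                          forall t', Rbar_le (Rbar_plus_sup s t') r -> Rbar_le t' t).

Definition sigma_inf {Z : LCS} (D : Z -> Prop) (zs : Z -> R) : Rbar :=
  Rbar_inf (fun x => exists z, D z /\ x = - zs z).
Definition sigma_sup {Z : LCS} (D : Z -> Prop) (zs : Z -> R) : Rbar :=
  Rbar_sup (fun x => exists z, D z /\ x = - zs z).

(* If z lies in A -^ B then every b + z with b in B lies in A, so
   sigma_A(φ) <= sigma_B(φ) +^ (-φ(z)) for every functional φ, and minimality of
   the inf-difference gives the inequality. Conversely, the inequality yields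
   sigma_A(φ) <= -φ(b + z) for every b in B. When A is the half-space of a single
   φ this says that b + z lies in A. In general, a point outside the closed convex
   set A = cl co (A + C) is strictly separated from it by a continuous linear
   functional which, being bounded below on a translate of the cone C, is
   nonnegative on C, so its opposite lies in C^-; hence the inequality for all
   φ in C^- \ {0} again puts b + z in A. The separation comes from the algebraic
   Hahn-Banach theorem (by Zorn's lemma) applied to the Minkowski gauge of a
   convex neighbourhood. Part (b) is the mirror image with sup-addition and A - C. *)

From Stdlib Require Import Reals Lra Classical ClassicalEpsilon.
From mathcomp Require classical_sets.
Open Scope R_scope.

(** * Extended reals *)

Lemma Rbar_le_trans x y z : Rbar_le x y -> Rbar_le y z -> Rbar_le x z.
Proof. destruct x, y, z; simpl; tauto || lra. Qed.

Lemma Rbar_le_antisym x y : Rbar_le x y -> Rbar_le y x -> x = y.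
Proof. destruct x, y; simpl; try tauto; intros; f_equal; lra. Qed.

Lemma Rbar_is_glb_unique P t t' : Rbar_is_glb P t -> Rbar_is_glb P t' -> t = t'.
Proof. intros [H1 H2] [H3 H4]. apply Rbar_le_antisym; auto. Qed.

Lemma Rbar_is_lub_unique P t t' : Rbar_is_lub P t -> Rbar_is_lub P t' -> t = t'.
Proof. intros [H1 H2] [H3 H4]. apply Rbar_le_antisym; auto. Qed.

Lemma Rbar_is_lub_exists (P : R -> Prop) : exists t, Rbar_is_lub P t.
Proof.
  destruct (classic (exists x, P x)) as [[x0 Px0]|Pempty].
  2: { exists MInf. split; [|intros; exact I].
       intros x Px. exfalso. eauto. }
  destruct (classic (exists M, forall x, P x -> x <= M)) as [[M HM]|Hunb].
  - destruct (completeness P) as [m [Hub Hleast]]; [exists M; exact HM|eauto|].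
    exists (Fin m). split; [exact Hub|].
    intros [u| |] Hu; simpl.
    + apply Hleast. exact Hu.
    + exact I.
    + exact (Hu x0 Px0).
  - exists PInf. split; [intros; exact I|].
    intros [u| |] Hu; simpl.
    + apply Hunb. exists u. exact Hu.
    + exact I.
    + exact (Hu x0 Px0).
Qed.

Lemma Rbar_is_glb_exists (P : R -> Prop) : exists t, Rbar_is_glb P t.
Proof.
  destruct (classic (exists x, P x)) as [[x0 Px0]|Pempty].
  2: { exists PInf. split; [|intros [] _; exact I].
       intros x Px. exfalso. eauto. }
  destruct (classic (exists M, forall x, P x -> M <= x)) as [[M HM]|Hunb].
  - destruct (completeness (fun y => P (- y))) as [m [Hub Hleast]].
    + exists (- M). intros y Py. specialize (HM _ Py). lra.
    + exists (- x0). rewrite Ropp_involutive. exact Px0.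
    + exists (Fin (- m)). split.
      * intros x Px. simpl. enough (- x <= m) by lra.
        apply Hub. rewrite Ropp_involutive. exact Px.
      * intros [u| |] Hu; simpl.
        -- enough (m <= - u) by lra.
           apply Hleast. intros y Py. specialize (Hu _ Py). simpl in Hu. lra.
        -- exact (Hu x0 Px0).
        -- exact I.
  - exists MInf. split; [intros; exact I|].
    intros [u| |] Hu; simpl.
    + apply Hunb. exists u. exact Hu.
    + exact (Hu x0 Px0).
    + exact I.
Qed.

Lemma Rbar_inf_spec P : Rbar_is_glb P (Rbar_inf P).
Proof. unfold Rbar_inf. apply epsilon_spec, Rbar_is_glb_exists. Qed.

Lemma Rbar_sup_spec P : Rbar_is_lub P (Rbar_sup P).
Proof. unfold Rbar_sup. apply epsilon_spec, Rbar_is_lub_exists. Qed.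

Lemma Rbar_inf_lb (P : R -> Prop) x : P x -> Rbar_le (Rbar_inf P) (Fin x).
Proof. apply Rbar_inf_spec. Qed.

Lemma Rbar_inf_glb (P : R -> Prop) u :
  (forall x, P x -> Rbar_le u (Fin x)) -> Rbar_le u (Rbar_inf P).
Proof. apply Rbar_inf_spec. Qed.

Lemma Rbar_sup_ub (P : R -> Prop) x : P x -> Rbar_le (Fin x) (Rbar_sup P).
Proof. apply Rbar_sup_spec. Qed.

Lemma Rbar_sup_lub (P : R -> Prop) u :
  (forall x, P x -> Rbar_le (Fin x) u) -> Rbar_le (Rbar_sup P) u.
Proof. apply Rbar_sup_spec. Qed.

Lemma Rbar_is_glb_empty (P : R -> Prop) : (forall x, ~ P x) -> Rbar_is_glb P PInf.
Proof. intros H. split; [intros x Px; contradiction (H x)|intros [] _; exact I]. Qed.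

Lemma Rbar_is_glb_full (P : R -> Prop) : (forall x, P x) -> Rbar_is_glb P MInf.
Proof.
  intros H. split; [intros; exact I|].
  intros [u| |] Hu; simpl; [specialize (Hu (u - 1) (H _)); simpl in Hu; lra|exact (Hu 0 (H 0))|exact I].
Qed.

Lemma Rbar_is_glb_min (P : R -> Prop) m : P m -> (forall x, P x -> m <= x) -> Rbar_is_glb P (Fin m).
Proof. intros Pm Hm. split; [exact Hm|intros u Hu; exact (Hu m Pm)]. Qed.

Lemma Rbar_is_lub_empty (P : R -> Prop) : (forall x, ~ P x) -> Rbar_is_lub P MInf.
Proof. intros H. split; [intros x Px; contradiction (H x)|intros [] _; exact I]. Qed.

Lemma Rbar_is_lub_full (P : R -> Prop) : (forall x, P x) -> Rbar_is_lub P PInf.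
Proof.
  intros H. split; [intros; exact I|].
  intros [u| |] Hu; simpl; [specialize (Hu (u + 1) (H _)); simpl in Hu; lra|exact I|exact (Hu 0 (H 0))].
Qed.

Lemma Rbar_is_lub_max (P : R -> Prop) m : P m -> (forall x, P x -> x <= m) -> Rbar_is_lub P (Fin m).
Proof. intros Pm Hm. split; [exact Hm|intros u Hu; exact (Hu m Pm)]. Qed.

Lemma Rbar_plus_inf_eq r s : Rbar_plus_inf r s =
  match r, s with
  | PInf, _ | _, PInf => PInf
  | MInf, _ | _, MInf => MInf
  | Fin a, Fin b => Fin (a + b)
  end.
Proof.
  eapply Rbar_is_glb_unique; [apply Rbar_inf_spec|].
  destruct r as [a| |], s as [b| |];
    first [ apply Rbar_is_glb_empty; intros x (a' & b' & Ha & Hb & _); simpl in *; tauto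
          | apply Rbar_is_glb_full; intros x; simpl | idtac ].
  - apply Rbar_is_glb_min; [exists a, b; simpl; repeat split; lra|].
    intros x (a' & b' & Ha & Hb & ->); simpl in *; lra.
  - exists a, (x - a); simpl; repeat split; lra.
  - exists (x - b), b; simpl; repeat split; lra.
  - exists 0, x; simpl; repeat split; lra.
Qed.

Lemma Rbar_plus_sup_eq r s : Rbar_plus_sup r s =
  match r, s with
  | MInf, _ | _, MInf => MInf
  | PInf, _ | _, PInf => PInf
  | Fin a, Fin b => Fin (a + b)
  end.
Proof.
  eapply Rbar_is_lub_unique; [apply Rbar_sup_spec|].
  destruct r as [a| |], s as [b| |];
    first [ apply Rbar_is_lub_empty; intros x (a' & b' & Ha & Hb & _); simpl in *; tauto
          | apply Rbar_is_lub_full; intros x; simpl | idtac ].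
  - apply Rbar_is_lub_max; [exists a, b; simpl; repeat split; lra|].
    intros x (a' & b' & Ha & Hb & ->); simpl in *; lra.
  - exists a, (x - a); simpl; repeat split; lra.
  - exists (x - b), b; simpl; repeat split; lra.
  - exists 0, x; simpl; repeat split; lra.
Qed.

Lemma Rbar_minus_inf_spec r s :
  Rbar_le r (Rbar_plus_inf s (Rbar_minus_inf r s)) /\
  forall t, Rbar_le r (Rbar_plus_inf s t) -> Rbar_le (Rbar_minus_inf r s) t.
Proof.
  unfold Rbar_minus_inf. apply epsilon_spec. setoid_rewrite Rbar_plus_inf_eq.
  destruct s as [b| |], r as [a| |].
  1: { exists (Fin (a - b)); simpl; split; [lra|intros [c| |]; simpl; tauto || lra]. }
  all: first [ exists MInf; simpl; split; [exact I|intros; exact I]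
             | exists PInf; simpl; split; [exact I|intros [] H; simpl in *; tauto] ].
Qed.

Lemma Rbar_minus_sup_spec r s :
  Rbar_le (Rbar_plus_sup s (Rbar_minus_sup r s)) r /\
  forall t, Rbar_le (Rbar_plus_sup s t) r -> Rbar_le t (Rbar_minus_sup r s).
Proof.
  unfold Rbar_minus_sup. apply epsilon_spec. setoid_rewrite Rbar_plus_sup_eq.
  destruct s as [b| |], r as [a| |].
  1: { exists (Fin (a - b)); simpl; split; [lra|intros [c| |]; simpl; tauto || lra]. }
  all: first [ exists PInf; simpl; split; [exact I|intros [] _; exact I]
             | exists MInf; simpl; split; [exact I|intros [] H; simpl in *; tauto] ].
Qed.

Lemma Rbar_plus_inf_le_Fin s t a b :
  Rbar_le s (Fin a) -> Rbar_le t (Fin b) -> Rbar_le (Rbar_plus_inf s t) (Fin (a + b)).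
Proof. intros Hs Ht. apply Rbar_inf_lb. exists a, b. auto. Qed.

Lemma Rbar_plus_sup_ge_Fin s t a b :
  Rbar_le (Fin a) s -> Rbar_le (Fin b) t -> Rbar_le (Fin (a + b)) (Rbar_plus_sup s t).
Proof. intros Hs Ht. apply Rbar_sup_ub. exists a, b. auto. Qed.

Lemma Rbar_plus_inf_Fin_glb (P : R -> Prop) c u :
  (forall x, P x -> Rbar_le u (Fin (x + c))) ->
  Rbar_le u (Rbar_plus_inf (Rbar_inf P) (Fin c)).
Proof.
  intros Hu. apply Rbar_inf_glb. intros x (a & b & Ha & Hb & ->). simpl in Hb.
  destruct u as [e| |]; simpl; [| |exact I].
  - assert (He : Rbar_le (Fin (e - c)) (Rbar_inf P)).
    { apply Rbar_inf_glb. intros y Py. specialize (Hu y Py). simpl in *. lra. }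
    pose proof (Rbar_le_trans _ _ _ He Ha). simpl in *. lra.
  - exact (Rbar_le_trans _ _ _ (Rbar_inf_glb P PInf Hu) Ha).
Qed.

Lemma Rbar_plus_sup_Fin_lub (P : R -> Prop) c u :
  (forall x, P x -> Rbar_le (Fin (x + c)) u) ->
  Rbar_le (Rbar_plus_sup (Rbar_sup P) (Fin c)) u.
Proof.
  intros Hu. apply Rbar_sup_lub. intros x (a & b & Ha & Hb & ->). simpl in Hb.
  destruct u as [e| |]; simpl; [|exact I|].
  - assert (He : Rbar_le (Rbar_sup P) (Fin (e - c))).
    { apply Rbar_sup_lub. intros y Py. specialize (Hu y Py). simpl in *. lra. }
    pose proof (Rbar_le_trans _ _ _ Ha He). simpl in *. lra.
  - exact (Rbar_le_trans _ _ _ Ha (Rbar_sup_lub P MInf Hu)).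
Qed.

Notation "x ⊕ y" := (zadd _ x y) (at level 50, left associativity).
Notation "a ⊙ x" := (zscal _ a x) (at level 40, left associativity).
Notation "⊖ x" := (zopp _ x) (at level 35, right associativity).
Notation "'θ'" := (zzero _).

Section VectorAlgebra.
Context {Z : LCS}.
Implicit Types x y u v : Z.

Lemma vaddA x y u : x ⊕ (y ⊕ u) = x ⊕ y ⊕ u.
Proof. apply zadd_assoc. Qed.
Lemma vaddC x y : x ⊕ y = y ⊕ x.
Proof. apply zadd_comm. Qed.
Lemma vaddv0 x : x ⊕ θ = x.
Proof. apply zadd_0. Qed.
Lemma vadd0v x : θ ⊕ x = x.
Proof. rewrite vaddC. apply zadd_0. Qed.
Lemma vaddvN x : x ⊕ ⊖ x = θ.
Proof. apply zadd_opp. Qed.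
Lemma vaddNv x : ⊖ x ⊕ x = θ.
Proof. rewrite vaddC. apply zadd_opp. Qed.
Lemma vaddK x y : x ⊕ y ⊕ ⊖ y = x.
Proof. rewrite <- vaddA, vaddvN, vaddv0. reflexivity. Qed.
Lemma vaddNK x y : x ⊕ ⊖ y ⊕ y = x.
Proof. rewrite <- vaddA, vaddNv, vaddv0. reflexivity. Qed.
Lemma vaddIr x y u : x ⊕ u = y ⊕ u -> x = y.
Proof. intros H. rewrite <- (vaddK x u), <- (vaddK y u), H. reflexivity. Qed.
Lemma vaddACA x y u v : x ⊕ y ⊕ (u ⊕ v) = x ⊕ u ⊕ (y ⊕ v).
Proof. rewrite !vaddA. f_equal. rewrite <- !vaddA. f_equal. apply vaddC. Qed.

Lemma vscalA a b x : a ⊙ (b ⊙ x) = (a * b) ⊙ x.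
Proof. apply zscal_assoc. Qed.
Lemma vscal1 x : 1 ⊙ x = x.
Proof. apply zscal_1. Qed.
Lemma vscalDr a x y : a ⊙ (x ⊕ y) = a ⊙ x ⊕ a ⊙ y.
Proof. apply zscal_distr_l. Qed.
Lemma vscalDl a b x : (a + b) ⊙ x = a ⊙ x ⊕ b ⊙ x.
Proof. apply zscal_distr_r. Qed.
Lemma vscal0 x : 0 ⊙ x = θ.
Proof.
  apply (vaddIr _ _ (0 ⊙ x)). rewrite <- vscalDl, vadd0v, Rplus_0_l. reflexivity.
Qed.
Lemma vscalv0 a : a ⊙ (θ : Z) = θ.
Proof. rewrite <- (vscal0 θ), vscalA, Rmult_0_r. reflexivity. Qed.
Lemma voppE x : ⊖ x = (-1) ⊙ x.
Proof.
  apply (vaddIr _ _ x). rewrite vaddNv. rewrite <- (vscal1 x) at 2.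
  rewrite <- vscalDl. replace (-1 + 1) with 0 by ring. rewrite vscal0. reflexivity.
Qed.
Lemma voppK x : ⊖ ⊖ x = x.
Proof. rewrite !voppE, vscalA. replace (-1 * -1) with 1 by ring. apply vscal1. Qed.

Lemma linear_add (f : Z -> R) x y : is_linear f -> f (x ⊕ y) = f x + f y.
Proof. intros [H _]. apply H. Qed.
Lemma linear_scal (f : Z -> R) a x : is_linear f -> f (a ⊙ x) = a * f x.
Proof. intros [_ H]. apply H. Qed.
Lemma linear0 (f : Z -> R) : is_linear f -> f θ = 0.
Proof. intros H. rewrite <- (vscal0 θ), linear_scal by exact H. ring. Qed.
Lemma linear_opp (f : Z -> R) x : is_linear f -> f (⊖ x) = - f x.
Proof. intros H. rewrite voppE, linear_scal by exact H. ring. Qed.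

End VectorAlgebra.

(** * Algebraic Hahn-Banach theorem *)

Section HahnBanach.
Variable Z : LCS.
Variable q : Z -> R.
Hypothesis q_subadd : forall x y, q (x ⊕ y) <= q x + q y.
Hypothesis q_homog : forall t x, 0 < t -> q (t ⊙ x) = t * q x.
Hypothesis q_ge0 : forall x, 0 <= q x.
Variable x0 : Z.
Hypothesis q_x0 : 1 <= q x0.

Record dominated_graph (G : Z * R -> Prop) : Prop := {
  graph_fun : forall x a b, G (x, a) -> G (x, b) -> a = b;
  graph_add : forall x y a b, G (x, a) -> G (y, b) -> G (x ⊕ y, a + b);
  graph_scal : forall t x a, G (x, a) -> G (t ⊙ x, t * a);
  graph_le : forall x a, G (x, a) -> a <= q x }.

Definition base_graph (p : Z * R) : Prop := fst p = snd p ⊙ x0.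

Lemma dominated_base_graph : dominated_graph base_graph.
Proof.
  unfold base_graph. constructor; simpl.
  - intros x a b -> Hab. apply NNPP. intros Hne.
    assert (Hx0 : x0 = θ).
    { assert (E : (a - b) ⊙ x0 = θ).
      { apply (vaddIr _ _ (b ⊙ x0)). rewrite <- vscalDl, vadd0v, <- Hab. f_equal. ring. }
      rewrite <- (vscal1 x0), <- (vscalv0 (/ (a - b))), <- E, vscalA.
      f_equal. field. lra. }
    assert (Hq0 := q_homog 2 θ Rlt_0_2). rewrite vscalv0 in Hq0.
    rewrite Hx0 in q_x0. lra.
  - intros x y a b -> ->. symmetry. apply vscalDl.
  - intros t x a ->. apply vscalA.
  - intros x a ->. destruct (Rlt_dec 0 a) as [Ha|Ha].
    + rewrite q_homog by exact Ha. nra.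
    + pose proof (q_ge0 (a ⊙ x0)). lra.
Qed.

Definition graph_extend (G : Z * R -> Prop) (y : Z) (c : R) (p : Z * R) : Prop :=
  exists x a t, G (x, a) /\ fst p = x ⊕ t ⊙ y /\ snd p = a + t * c.

Definition extension_value (G : Z * R -> Prop) (y : Z) (c : R) : Prop :=
  forall x a, G (x, a) -> a - q (x ⊕ (-1) ⊙ y) <= c /\ c <= q (x ⊕ y) - a.

Lemma extension_value_exists G y :
  dominated_graph G -> G (θ, 0) -> exists c, extension_value G y c.
Proof.
  intros HG HG0.
  (* a + a' <= q (x + x') <= q (x - y) + q (x' + y) separates the two families of bounds *)
  assert (Hsep : forall x a x' a', G (x, a) -> G (x', a') ->
            a - q (x ⊕ (-1) ⊙ y) <= q (x' ⊕ y) - a').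
  { intros x a x' a' Hxa Hxa'.
    pose proof (graph_le _ HG _ _ (graph_add _ HG _ _ _ _ Hxa Hxa')).
    pose proof (q_subadd (x ⊕ (-1) ⊙ y) (x' ⊕ y)) as Hsub.
    replace (x ⊕ (-1) ⊙ y ⊕ (x' ⊕ y)) with (x ⊕ x') in Hsub; [lra|].
    rewrite vaddACA, <- voppE, vaddNv, vaddv0. reflexivity. }
  set (L := fun v => exists x a, G (x, a) /\ v = a - q (x ⊕ (-1) ⊙ y)).
  destruct (completeness L) as [c [Hub Hleast]].
  - exists (q (θ ⊕ y) - 0). intros v (x & a & Hxa & ->). exact (Hsep _ _ _ _ Hxa HG0).
  - exists (0 - q (θ ⊕ (-1) ⊙ y)), θ, 0. split; [exact HG0|reflexivity].
  - exists c. intros x a Hxa. split.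
    + apply Hub. exists x, a. auto.
    + apply Hleast. intros v (x' & a' & Hxa' & ->). exact (Hsep _ _ _ _ Hxa' Hxa).
Qed.

Lemma extension_value_le G y c : dominated_graph G -> extension_value G y c ->
  forall x a t, G (x, a) -> a + t * c <= q (x ⊕ t ⊙ y).
Proof.
  intros HG Hc x a t Hxa.
  (* rescale (x, a) by |t| and use the bound of [extension_value] at the rescaled point *)
  assert (Hrescale : forall s r, 0 < s -> s ⊙ (/ s ⊙ x ⊕ r ⊙ y) = x ⊕ (s * r) ⊙ y).
  { intros s r Hs. rewrite vscalDr, !vscalA, Rinv_r, vscal1 by lra. reflexivity. }
  destruct (Rtotal_order t 0) as [Ht|[->|Ht]].
  - destruct (Hc _ _ (graph_scal _ HG (/ - t) _ _ Hxa)) as [Hlow _].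
    pose proof (Hrescale (- t) (-1) ltac:(lra)) as E.
    replace (- t * -1) with t in E by ring.
    pose proof (q_homog (- t) (/ - t ⊙ x ⊕ (-1) ⊙ y) ltac:(lra)) as Hq.
    rewrite E in Hq.
    apply (Rmult_le_compat_l (- t)) in Hlow; [|lra].
    replace (- t * (/ - t * a - q (/ - t ⊙ x ⊕ (-1) ⊙ y)))
      with (a - (- t) * q (/ - t ⊙ x ⊕ (-1) ⊙ y)) in Hlow by (field; lra).
    lra.
  - rewrite vscal0, vaddv0, Rmult_0_l, Rplus_0_r. exact (graph_le _ HG _ _ Hxa).
  - destruct (Hc _ _ (graph_scal _ HG (/ t) _ _ Hxa)) as [_ Hup].
    pose proof (Hrescale t 1 Ht) as E. rewrite Rmult_1_r, vscal1 in E.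
    pose proof (q_homog t (/ t ⊙ x ⊕ y) Ht) as Hq.
    rewrite E in Hq.
    apply (Rmult_le_compat_l t) in Hup; [|lra].
    replace (t * (q (/ t ⊙ x ⊕ y) - / t * a)) with (t * q (/ t ⊙ x ⊕ y) - a) in Hup
      by (field; lra).
    lra.
Qed.

Lemma dominated_graph_extend G y c :
  dominated_graph G -> (forall a, ~ G (y, a)) -> extension_value G y c ->
  dominated_graph (graph_extend G y c).
Proof.
  intros HG Hy Hc. unfold graph_extend. constructor; simpl.
  - intros x b b' (x1 & a1 & t & H1 & E1 & ->) (x2 & a2 & s & H2 & E2 & ->).
    rewrite E1 in E2. destruct (Req_dec t s) as [<-|Hts].
    + apply vaddIr in E2. subst x2. rewrite (graph_fun _ HG _ _ _ H1 H2). reflexivity.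
    + exfalso. apply (Hy (/ (t - s) * (a2 + (-1) * a1))).
      assert (Ey : y = / (t - s) ⊙ (x2 ⊕ (-1) ⊙ x1)).
      { assert (E : x1 ⊕ (t - s) ⊙ y = x2).
        { apply (vaddIr _ _ (s ⊙ y)). rewrite <- vaddA, <- vscalDl.
          replace (t - s + s) with t by ring. exact E2. }
        rewrite <- voppE, <- E, (vaddC x1), vaddK, vscalA, Rinv_l, vscal1 by lra.
        reflexivity. }
      rewrite Ey. apply (graph_scal _ HG), (graph_add _ HG); [exact H2|].
      apply (graph_scal _ HG). exact H1.
  - intros x x' b b' (x1 & a1 & t & H1 & -> & ->) (x2 & a2 & s & H2 & -> & ->).
    exists (x1 ⊕ x2), (a1 + a2), (t + s).
    split; [exact (graph_add _ HG _ _ _ _ H1 H2)|].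
    split; [rewrite vaddACA, vscalDl; reflexivity|ring].
  - intros r x b (x1 & a1 & t & H1 & -> & ->). exists (r ⊙ x1), (r * a1), (r * t).
    split; [exact (graph_scal _ HG _ _ _ H1)|].
    split; [rewrite vscalDr, vscalA; reflexivity|ring].
  - intros x b (x1 & a1 & t & H1 & -> & ->). exact (extension_value_le G y c HG Hc _ _ _ H1).
Qed.

Definition with_base (G : Z * R -> Prop) (p : Z * R) : Prop := base_graph p \/ G p.

Lemma dominated_chain_union (F : (Z * R -> Prop) -> Prop) :
  (forall X, F X -> dominated_graph (with_base X)) ->
  classical_sets.total_on F classical_sets.subset ->
  dominated_graph (with_base (classical_sets.bigcup F (fun X => X))).
Proof.
  intros HF Htot.
  set (U := with_base (classical_sets.bigcup F (fun X => X))).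
  (* any two points of the union already lie in one dominated graph below it *)
  assert (Hcommon : forall p p', U p -> U p' ->
            exists G, dominated_graph G /\ (forall r, G r -> U r) /\ G p /\ G p').
  { assert (Hsub : forall X, F X -> forall r, with_base X r -> U r).
    { intros X HX r [Hr|Hr]; [left; exact Hr|right; exists X; assumption]. }
    intros p p' [Hp|[X HX Hp]] [Hp'|[X' HX' Hp']].
    - exists base_graph. split; [exact dominated_base_graph|].
      split; [intros r Hr; left; exact Hr|auto].
    - exists (with_base X'). split; [exact (HF _ HX')|]. split; [exact (Hsub _ HX')|].
      split; [left|right]; assumption.
    - exists (with_base X). split; [exact (HF _ HX)|]. split; [exact (Hsub _ HX)|].
      split; [right|left]; assumption.
    - destruct (Htot _ _ HX HX') as [Hincl|Hincl].
      + exists (with_base X'). split; [exact (HF _ HX')|]. split; [exact (Hsub _ HX')|].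
        split; right; [apply Hincl|]; assumption.
      + exists (with_base X). split; [exact (HF _ HX)|]. split; [exact (Hsub _ HX)|].
        split; right; [|apply Hincl]; assumption. }
  constructor.
  - intros x a b Ha Hb. destruct (Hcommon _ _ Ha Hb) as (G & HG & _ & Ga & Gb).
    exact (graph_fun _ HG _ _ _ Ga Gb).
  - intros x y a b Ha Hb. destruct (Hcommon _ _ Ha Hb) as (G & HG & HGU & Ga & Gb).
    exact (HGU _ (graph_add _ HG _ _ _ _ Ga Gb)).
  - intros t x a Ha. destruct (Hcommon _ _ Ha Ha) as (G & HG & HGU & Ga & _).
    exact (HGU _ (graph_scal _ HG _ _ _ Ga)).
  - intros x a Ha. destruct (Hcommon _ _ Ha Ha) as (G & HG & _ & Ga & _).
    exact (graph_le _ HG _ _ Ga).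
Qed.

Lemma dominated_graph_with_base G :
  (forall p, base_graph p -> G p) -> dominated_graph G -> dominated_graph (with_base G).
Proof.
  intros Hbase HG.
  assert (HGb : forall p, with_base G p -> G p) by (intros p [Hp|Hp]; auto).
  constructor.
  - intros x a b Ha Hb. exact (graph_fun _ HG _ _ _ (HGb _ Ha) (HGb _ Hb)).
  - intros x y a b Ha Hb. right. exact (graph_add _ HG _ _ _ _ (HGb _ Ha) (HGb _ Hb)).
  - intros t x a Ha. right. exact (graph_scal _ HG _ _ _ (HGb _ Ha)).
  - intros x a Ha. exact (graph_le _ HG _ _ (HGb _ Ha)).
Qed.

Lemma dominated_graph_total :
  exists G, dominated_graph G /\ (forall p, base_graph p -> G p) /\ forall x, exists a, G (x, a).
Proof.
  destruct (@classical_sets.Zorn_bigcup _ (fun X => dominated_graph (with_base X))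
              dominated_chain_union) as (A & HA & Amax).
  exists (with_base A). split; [exact HA|]. split; [intros p Hp; left; exact Hp|].
  intros y. apply NNPP. intros Hy.
  assert (Hy' : forall a, ~ with_base A (y, a)) by (intros a Ha; apply Hy; eauto).
  assert (HA0 : with_base A (θ, 0)) by (left; simpl; symmetry; apply vscal0).
  destruct (extension_value_exists _ y HA HA0) as [c Hc].
  set (B := graph_extend (with_base A) y c).
  assert (HAB : forall p, with_base A p -> B p).
  { intros [x a] Hxa. exists x, a, 0. simpl. rewrite vscal0, vaddv0.
    split; [exact Hxa|split; [reflexivity|ring]]. }
  apply (Amax B).
  - split; [intros p Hp; apply HAB; right; exact Hp|].
    intros HBA. apply (Hy' c). right. apply HBA.
    exists θ, 0, 1. simpl. rewrite vscal1, vadd0v.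
    split; [exact HA0|split; [reflexivity|ring]].
  - apply dominated_graph_with_base; [intros p Hp; apply HAB; left; exact Hp|].
    exact (dominated_graph_extend _ _ _ HA Hy' Hc).
Qed.

Theorem hahn_banach : exists f, is_linear f /\ f x0 = 1 /\ forall x, f x <= q x.
Proof.
  destruct dominated_graph_total as (G & HG & Hbase & Htot).
  destruct (choice _ Htot) as [f Hf].
  assert (Hfun : forall x a, G (x, a) -> f x = a) by (intros; eapply graph_fun; eauto).
  exists f. split; [split|split].
  - intros x y. apply Hfun, (graph_add _ HG); apply Hf.
  - intros a x. apply Hfun, (graph_scal _ HG), Hf.
  - apply Hfun, Hbase. simpl. symmetry. apply vscal1.
  - intros x. apply (graph_le _ HG), Hf.
Qed.

End HahnBanach.

(** * Minkowski gauge *)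

Section MinkowskiGauge.
Variable Z : LCS.
Variable K : Z -> Prop.
Hypothesis K_convex : convex_set K.
Hypothesis K0 : K θ.
Hypothesis K_absorbing : forall x, exists d, 0 < d /\ K (d ⊙ x).

Definition gauge_admissible (x : Z) (t : R) : Prop := 0 < t /\ K (/ t ⊙ x).

Lemma gauge_exists x : exists m, (forall t, gauge_admissible x t -> m <= t) /\
  forall m', (forall t, gauge_admissible x t -> m' <= t) -> m' <= m.
Proof.
  destruct (K_absorbing x) as (d & Hd & Kdx).
  destruct (completeness (fun u => gauge_admissible x (- u))) as [l [Hub Hleast]].
  - exists 0. intros u [Hu _]. lra.
  - exists (- / d). unfold gauge_admissible. rewrite Ropp_involutive, Rinv_inv.
    split; [apply Rinv_0_lt_compat; exact Hd|exact Kdx].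
  - exists (- l). split.
    + intros t Ht. enough (- t <= l) by lra. apply Hub. rewrite Ropp_involutive. exact Ht.
    + intros m' Hm'. enough (l <= - m') by lra.
      apply Hleast. intros u Hu. specialize (Hm' _ Hu). lra.
Qed.

Definition gauge (x : Z) : R := proj1_sig (constructive_indefinite_description _ (gauge_exists x)).

Lemma gauge_lb x t : gauge_admissible x t -> gauge x <= t.
Proof. apply (proj2_sig (constructive_indefinite_description _ (gauge_exists x))). Qed.

Lemma gauge_glb x m : (forall t, gauge_admissible x t -> m <= t) -> m <= gauge x.
Proof. apply (proj2_sig (constructive_indefinite_description _ (gauge_exists x))). Qed.

Lemma gauge_ge0 x : 0 <= gauge x.
Proof. apply gauge_glb. intros t [Ht _]. lra. Qed.

Lemma convex_scal_mem x t s : 0 < t -> t <= s -> K (/ t ⊙ x) -> K (/ s ⊙ x).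
Proof.
  intros Ht Hts Kx.
  replace (/ s ⊙ x) with ((t / s) ⊙ (/ t ⊙ x) ⊕ (1 - t / s) ⊙ θ).
  - apply K_convex; [exact Kx|exact K0|].
    split; [apply Rlt_le, Rdiv_lt_0_compat; lra|].
    apply (Rmult_le_reg_r s); [lra|]. unfold Rdiv. rewrite Rmult_assoc, Rinv_l; lra.
  - rewrite vscalv0, vaddv0, vscalA. f_equal. field. lra.
Qed.

Lemma gauge_admissible_gt x t : gauge x < t -> gauge_admissible x t.
Proof.
  intros Ht. apply NNPP. intros Hna.
  enough (t <= gauge x) by lra.
  apply gauge_glb. intros t' [Ht' Kt']. apply Rnot_lt_le. intros Hlt.
  apply Hna. split; [lra|]. exact (convex_scal_mem x t' t Ht' (Rlt_le _ _ Hlt) Kt').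
Qed.

Lemma gauge_homog s x : 0 < s -> gauge (s ⊙ x) = s * gauge x.
Proof.
  intros Hs.
  assert (Hadm : forall t, 0 < t -> gauge_admissible x t <-> gauge_admissible (s ⊙ x) (s * t)).
  { intros t Ht. unfold gauge_admissible.
    replace (/ (s * t) ⊙ (s ⊙ x)) with (/ t ⊙ x) by (rewrite vscalA; f_equal; field; lra).
    split; intros [_ Kx]; split; [nra|exact Kx|exact Ht|exact Kx]. }
  apply Rle_antisym.
  - enough (gauge (s ⊙ x) / s <= gauge x) as H.
    { apply (Rmult_le_compat_l s) in H; [|lra].
      replace (s * (gauge (s ⊙ x) / s)) with (gauge (s ⊙ x)) in H by (field; lra). exact H. }
    apply gauge_glb. intros t Ht.
    pose proof (gauge_lb _ _ (proj1 (Hadm t (proj1 Ht)) Ht)).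
    apply (Rmult_le_reg_l s); [lra|].
    replace (s * (gauge (s ⊙ x) / s)) with (gauge (s ⊙ x)) by (field; lra). exact H.
  - apply gauge_glb. intros t Ht.
    assert (Ht' : 0 < t / s) by (apply Rdiv_lt_0_compat; [apply Ht|exact Hs]).
    assert (Hxt : gauge_admissible x (t / s)).
    { apply Hadm; [exact Ht'|]. replace (s * (t / s)) with t by (field; lra). exact Ht. }
    pose proof (gauge_lb _ _ Hxt).
    apply (Rmult_le_compat_l s) in H; [|lra].
    replace (s * (t / s)) with t in H by (field; lra). exact H.
Qed.

Lemma gauge_subadd x y : gauge (x ⊕ y) <= gauge x + gauge y.
Proof.
  apply Rnot_lt_le. intros Hlt.
  set (e := (gauge (x ⊕ y) - (gauge x + gauge y)) / 3).
  destruct (gauge_admissible_gt x (gauge x + e)) as [Ht Kx]; [unfold e; lra|].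
  destruct (gauge_admissible_gt y (gauge y + e)) as [Hu Ky]; [unfold e; lra|].
  set (t := gauge x + e) in *. set (u := gauge y + e) in *.
  enough (gauge (x ⊕ y) <= t + u) by (unfold t, u, e in *; lra).
  apply gauge_lb. split; [lra|].
  replace (/ (t + u) ⊙ (x ⊕ y)) with ((t / (t + u)) ⊙ (/ t ⊙ x) ⊕ (1 - t / (t + u)) ⊙ (/ u ⊙ y)).
  - apply K_convex; [exact Kx|exact Ky|].
    split; [apply Rlt_le, Rdiv_lt_0_compat; lra|].
    apply (Rmult_le_reg_r (t + u)); [lra|]. unfold Rdiv. rewrite Rmult_assoc, Rinv_l; lra.
  - rewrite vscalDr, !vscalA. f_equal; f_equal; field; lra.
Qed.

Lemma gauge_le1 x : K x -> gauge x <= 1.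
Proof. intros Kx. apply gauge_lb. split; [lra|]. rewrite Rinv_1, vscal1. exact Kx. Qed.

Lemma gauge_lt1 x : gauge x < 1 -> K x.
Proof.
  intros Hx. destruct (gauge_admissible_gt _ _ Hx) as [_ Kx]. rewrite Rinv_1, vscal1 in Kx. exact Kx.
Qed.

End MinkowskiGauge.

(** * Separation *)

Lemma open_absorbing {Z : LCS} (V : Z -> Prop) :
  zopen Z V -> V θ -> forall x, exists d, 0 < d /\ V (d ⊙ x).
Proof.
  intros HV V0 x.
  destruct (zscal_cont Z 0 x V HV) as (eps & Heps & W & _ & Wx & HW); [rewrite vscal0; exact V0|].
  exists (eps / 2). split; [lra|].
  apply HW; [rewrite Rminus_0_r, Rabs_right; lra|exact Wx].
Qed.

Lemma linear_bounded_continuous {Z : LCS} (f : Z -> R) (V : Z -> Prop) :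
  is_linear f -> zopen Z V -> V θ -> (forall v, V v -> f v <= 1) -> is_continuous f.
Proof.
  intros Hf HV V0 HfV x eps Heps.
  set (c := 2 / eps).
  assert (Hc : 0 < c) by (apply Rdiv_lt_0_compat; lra).
  destruct (zscal_cont Z c θ V HV) as (e1 & He1 & V1 & HV1 & V1θ & HV1s);
    [rewrite vscalv0; exact V0|].
  destruct (zscal_cont Z (- c) θ V HV) as (e2 & He2 & V2 & HV2 & V2θ & HV2s);
    [rewrite vscalv0; exact V0|].
  destruct (zadd_cont Z x (⊖ x) (fun z => V1 z /\ V2 z) (zopen_inter Z _ _ HV1 HV2))
    as (W & W' & HW & _ & Wx & W'x & HWW'); [rewrite vaddvN; auto|].
  exists W. split; [exact HW|]. split; [exact Wx|]. intros y Wy.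
  destruct (HWW' y (⊖ x) Wy W'x) as [V1y V2y].
  (* f (±c (y - x)) <= 1 bounds |f y - f x| by 1 / c = eps / 2 *)
  assert (Hup := HfV _ (HV1s c _ ltac:(rewrite Rminus_diag, Rabs_R0; lra) V1y)).
  assert (Hlow := HfV _ (HV2s (- c) _ ltac:(rewrite Rminus_diag, Rabs_R0; lra) V2y)).
  rewrite linear_scal, linear_add, linear_opp in Hup, Hlow by exact Hf.
  assert (Hce : c * eps = 2) by (unfold c; field; lra).
  enough (Rabs (f y - f x) <= eps / 2) by lra.
  apply Rabs_le. split; nra.
Qed.

Lemma not_closure_open {Z : LCS} (G : Z -> Prop) p :
  ~ closure G p -> exists U, zopen Z U /\ U p /\ forall z, U z -> ~ G z.
Proof.
  intros Hp. apply NNPP. intros Hno. apply Hp. intros U HU Up.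
  apply NNPP. intros Hdisj. apply Hno. exists U. split; [exact HU|]. split; [exact Up|].
  intros z Uz Gz. apply Hdisj. exists z. auto.
Qed.

(* The set V + g0 - G. *)
Definition translate_sub {Z : LCS} (V : Z -> Prop) (g0 : Z) (G : Z -> Prop) (k : Z) : Prop :=
  exists v g, V v /\ G g /\ k ⊕ g = v ⊕ g0.

Lemma translate_sub_convex {Z : LCS} (V G : Z -> Prop) g0 :
  convex_set V -> convex_set G -> convex_set (translate_sub V g0 G).
Proof.
  intros HV HG k1 k2 t (v1 & g1 & V1 & G1 & E1) (v2 & g2 & V2 & G2 & E2) Ht.
  exists (t ⊙ v1 ⊕ (1 - t) ⊙ v2), (t ⊙ g1 ⊕ (1 - t) ⊙ g2).
  split; [exact (HV _ _ _ V1 V2 Ht)|]. split; [exact (HG _ _ _ G1 G2 Ht)|].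
  rewrite vaddACA, <- !vscalDr, E1, E2, !vscalDr, vaddACA, <- vscalDl.
  replace (t + (1 - t)) with 1 by ring. rewrite vscal1. reflexivity.
Qed.

Lemma translate_sub_incl {Z : LCS} (V G : Z -> Prop) g0 v :
  G g0 -> V v -> translate_sub V g0 G v.
Proof. intros Gg0 Vv. exists v, g0. auto. Qed.

Lemma translate_sub_notin {Z : LCS} (V G : Z -> Prop) g0 p :
  (forall v, V v -> ~ G (p ⊕ v)) -> ~ translate_sub V g0 G (g0 ⊕ ⊖ p).
Proof.
  intros Hdisj (v & g & Vv & Gg & E). apply (Hdisj v Vv).
  replace (p ⊕ v) with g; [exact Gg|].
  apply (vaddIr _ _ (g0 ⊕ ⊖ p)).
  rewrite vaddC, E, (vaddC p v), vaddACA, vaddvN, vaddv0. reflexivity.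
Qed.

Lemma separation_open {Z : LCS} (G : Z -> Prop) g0 p U :
  convex_set G -> G g0 -> zopen Z U -> U p -> (forall z, U z -> ~ G z) ->
  exists f, in_dual f /\ exists d, 0 < d /\ forall g, G g -> f p + d <= f g.
Proof.
  intros HG Gg0 HU Up HUG.
  destruct (zadd_cont Z p θ U HU) as (V1 & W & _ & HW & V1p & Wθ & HV1W); [rewrite vaddv0; exact Up|].
  destruct (zloc_convex Z W HW Wθ) as (V & HV & Vθ & Vconv & VW).
  set (K := translate_sub V g0 G).
  assert (K_convex : convex_set K) by exact (translate_sub_convex V G g0 Vconv HG).
  assert (VK : forall v, V v -> K v) by (intros v Vv; exact (translate_sub_incl V G g0 v Gg0 Vv)).
  assert (K_absorbing : forall x, exists d, 0 < d /\ K (d ⊙ x)).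
  { intros x. destruct (open_absorbing V HV Vθ x) as (d & Hd & Vd). eauto. }
  set (x0 := g0 ⊕ ⊖ p).
  assert (Hx0 : ~ K x0).
  { apply translate_sub_notin. intros v Vv. apply HUG. apply HV1W; [exact V1p|exact (VW v Vv)]. }
  assert (Hq : 1 <= gauge Z K K_absorbing x0).
  { apply Rnot_lt_le. intros Hlt. exact (Hx0 (gauge_lt1 Z K K_convex (VK _ Vθ) K_absorbing _ Hlt)). }
  destruct (hahn_banach Z (gauge Z K K_absorbing)
              (gauge_subadd Z K K_convex (VK _ Vθ) K_absorbing) (gauge_homog Z K K_absorbing)
              (gauge_ge0 Z K K_absorbing) x0 Hq) as (f & Hf & fx0 & Hfq).
  assert (HfK : forall k, K k -> f k <= 1).
  { intros k Kk. eapply Rle_trans; [apply Hfq|exact (gauge_le1 Z K K_absorbing k Kk)]. }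
  exists f. split.
  - split; [exact Hf|].
    apply (linear_bounded_continuous f V Hf HV Vθ). intros v Vv. exact (HfK v (VK v Vv)).
  - destruct (open_absorbing V HV Vθ x0) as (d & Hd & Vd). exists d. split; [exact Hd|].
    intros g Gg.
    assert (Hk : f (d ⊙ x0 ⊕ g0 ⊕ ⊖ g) <= 1).
    { apply HfK. exists (d ⊙ x0), g. split; [exact Vd|]. split; [exact Gg|]. apply vaddNK. }
    unfold x0 in fx0, Hk.
    rewrite !linear_add, linear_scal, linear_opp, fx0 in Hk by exact Hf.
    rewrite linear_add, linear_opp in fx0 by exact Hf. lra.
Qed.

Lemma in_dual_opp {Z : LCS} (f : Z -> R) : in_dual f -> in_dual (fun z => - f z).
Proof.
  intros [[Hadd Hscal] Hcont]. split; [split|].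
  - intros x y. rewrite Hadd. ring.
  - intros a x. rewrite Hscal. ring.
  - intros x eps Heps. destruct (Hcont x eps Heps) as (U & HU & Ux & HUx).
    exists U. split; [exact HU|]. split; [exact Ux|]. intros y Uy.
    replace (- f y - - f x) with (- (f y - f x)) by ring. rewrite Rabs_Ropp. exact (HUx y Uy).
Qed.

Lemma cone_separation {Z : LCS} (K A G : Z -> Prop) a0 p :
  (forall t k, 0 < t -> K k -> K (t ⊙ k)) -> K θ -> A a0 ->
  (forall a k, A a -> K k -> G (a ⊕ k)) -> ~ closure (conv_hull G) p ->
  exists f, in_dual f /\ (forall k, K k -> 0 <= f k) /\
    exists d, 0 < d /\ forall a, A a -> f p + d <= f a.
Proof.
  intros HKscal K0 Aa0 HAKG Hp.
  destruct (not_closure_open _ _ Hp) as (U & HU & Up & HUG).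
  assert (HAK : forall a k, A a -> K k -> conv_hull G (a ⊕ k)).
  { intros a k Aa Kk D _ HGD. exact (HGD _ (HAKG a k Aa Kk)). }
  assert (Hconv : convex_set (conv_hull G)).
  { intros a b t Ha Hb Ht D HD HGD. exact (HD _ _ _ (Ha D HD HGD) (Hb D HD HGD) Ht). }
  destruct (separation_open _ _ p U Hconv (HAK _ _ Aa0 K0) HU Up HUG) as (f & Hf & d & Hd & Hsep).
  assert (Hlin : is_linear f) by apply Hf.
  assert (HfA : forall a k, A a -> K k -> f p + d <= f a + f k).
  { intros a k Aa Kk. rewrite <- linear_add by exact Hlin. exact (Hsep _ (HAK _ _ Aa Kk)). }
  exists f. split; [exact Hf|]. split.
  - (* f is bounded below on the cone a0 + K, hence nonnegative on K *)
    intros k Kk. apply Rnot_lt_le. intros Hneg.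
    set (s := (f a0 - f p + 1) / - f k).
    assert (Hbound := HfA _ _ Aa0 K0).
    rewrite linear0, Rplus_0_r in Hbound by exact Hlin.
    assert (Hs : 0 < s) by (apply Rdiv_lt_0_compat; lra).
    specialize (HfA _ _ Aa0 (HKscal _ _ Hs Kk)). rewrite linear_scal in HfA by exact Hlin.
    replace (s * f k) with (- (f a0 - f p + 1)) in HfA by (unfold s; field; lra).
    lra.
  - exists d. split; [exact Hd|]. intros a Aa.
    specialize (HfA _ _ Aa K0). rewrite linear0, Rplus_0_r in HfA by exact Hlin. exact HfA.
Qed.

Lemma Q_inf_separation {Z : LCS} (C A : Z -> Prop) p :
  C θ -> convex_cone C -> (exists zs, Cminus C zs /\ zs <> (fun _ => 0)) ->
  in_Q_inf C A -> ~ A p ->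
  exists zs, Cminus C zs /\ zs <> (fun _ => 0) /\ ~ Rbar_le (sigma_inf A zs) (Fin (- zs p)).
Proof.
  intros C0 [_ HCscal] HCm HA Ap.
  destruct (classic (exists a0, A a0)) as [[a0 Aa0]|Aempty].
  - destruct (cone_separation C A (set_add A C) a0 p HCscal C0 Aa0)
      as (f & Hf & HfC & d & Hd & HfA).
    + intros a c Aa Cc. exists a, c. auto.
    + intros Hcl. apply Ap, HA, Hcl.
    + exists (fun z => - f z). split; [split; [exact (in_dual_opp f Hf)|]|split].
      * intros c Cc. specialize (HfC c Cc). lra.
      * intros E. specialize (HfA a0 Aa0).
        pose proof (f_equal (fun g => g p) E). pose proof (f_equal (fun g => g a0) E).
        simpl in *. lra.
      * intros Hle.
        assert (Hge : Rbar_le (Fin (f p + d)) (sigma_inf A (fun z => - f z))).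
        { apply Rbar_inf_glb. intros x (a & Aa & ->). specialize (HfA a Aa). simpl. lra. }
        pose proof (Rbar_le_trans _ _ _ Hge Hle). simpl in *. lra.
  - destruct HCm as (zs & Hzs & Hnz). exists zs. split; [exact Hzs|]. split; [exact Hnz|].
    intros Hle. refine (Rbar_le_trans PInf _ _ (Rbar_inf_glb _ PInf _) Hle).
    intros x (a & Aa & _). exfalso. eauto.
Qed.

Lemma Q_sup_separation {Z : LCS} (C A : Z -> Prop) p :
  C θ -> convex_cone C -> (exists zs, Cminus C zs /\ zs <> (fun _ => 0)) ->
  in_Q_sup C A -> ~ A p ->
  exists zs, Cminus C zs /\ zs <> (fun _ => 0) /\ ~ Rbar_le (Fin (- zs p)) (sigma_sup A zs).
Proof.
  intros C0 [_ HCscal] HCm HA Ap.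
  destruct (classic (exists a0, A a0)) as [[a0 Aa0]|Aempty].
  - destruct (cone_separation (fun k => C (⊖ k)) A (set_sub A C) a0 p)
      as (f & Hf & HfC & d & Hd & HfA).
    + intros t k Ht Ck. replace (⊖ (t ⊙ k)) with (t ⊙ ⊖ k); [exact (HCscal t _ Ht Ck)|].
      rewrite !voppE, !vscalA, Rmult_comm. reflexivity.
    + rewrite voppE, vscalv0. exact C0.
    + exact Aa0.
    + intros a k Aa Ck. exists a, (⊖ k). rewrite voppK. auto.
    + intros Hcl. apply Ap, HA, Hcl.
    + assert (Hlin : is_linear f) by apply Hf.
      exists f. split; [split; [exact Hf|]|split].
      * intros c Cc. assert (Hc := HfC (⊖ c) ltac:(rewrite voppK; exact Cc)).
        rewrite linear_opp in Hc by exact Hlin. lra.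
      * intros E. specialize (HfA a0 Aa0).
        pose proof (f_equal (fun g => g p) E). pose proof (f_equal (fun g => g a0) E).
        simpl in *. lra.
      * intros Hle.
        assert (Hge : Rbar_le (sigma_sup A f) (Fin (- f p - d))).
        { apply Rbar_sup_lub. intros x (a & Aa & ->). specialize (HfA a Aa). simpl. lra. }
        pose proof (Rbar_le_trans _ _ _ Hle Hge). simpl in *. lra.
  - destruct HCm as (zs & Hzs & Hnz). exists zs. split; [exact Hzs|]. split; [exact Hnz|].
    intros Hle. refine (Rbar_le_trans _ _ MInf Hle (Rbar_sup_lub _ MInf _)).
    intros x (a & Aa & _). exfalso. eauto.
Qed.

(** * Support functions and set differences *)

Lemma set_diff_minus_sigma_inf {Z : LCS} (A B : Z -> Prop) zs z :
  is_linear zs -> set_diff A B z ->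
  Rbar_le (Rbar_minus_inf (sigma_inf A zs) (sigma_inf B zs)) (Fin (- zs z)).
Proof.
  intros Hzs Hz. apply (proj2 (Rbar_minus_inf_spec _ _)).
  apply Rbar_plus_inf_Fin_glb. intros x (b & Bb & ->).
  apply Rbar_inf_lb. exists (b ⊕ z). split; [exact (Hz b Bb)|].
  rewrite linear_add by exact Hzs. ring.
Qed.

Lemma set_diff_minus_sigma_sup {Z : LCS} (A B : Z -> Prop) zs z :
  is_linear zs -> set_diff A B z ->
  Rbar_le (Fin (- zs z)) (Rbar_minus_sup (sigma_sup A zs) (sigma_sup B zs)).
Proof.
  intros Hzs Hz. apply (proj2 (Rbar_minus_sup_spec _ _)).
  apply Rbar_plus_sup_Fin_lub. intros x (b & Bb & ->).
  apply Rbar_sup_ub. exists (b ⊕ z). split; [exact (Hz b Bb)|].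
  rewrite linear_add by exact Hzs. ring.
Qed.

Lemma sigma_inf_le_translate {Z : LCS} (A B : Z -> Prop) zs z b :
  is_linear zs -> B b ->
  Rbar_le (Rbar_minus_inf (sigma_inf A zs) (sigma_inf B zs)) (Fin (- zs z)) ->
  Rbar_le (sigma_inf A zs) (Fin (- zs (b ⊕ z))).
Proof.
  intros Hzs Bb Hz.
  apply Rbar_le_trans with
    (Rbar_plus_inf (sigma_inf B zs) (Rbar_minus_inf (sigma_inf A zs) (sigma_inf B zs)));
    [apply Rbar_minus_inf_spec|].
  rewrite linear_add by exact Hzs. replace (- (zs b + zs z)) with (- zs b + - zs z) by ring.
  apply Rbar_plus_inf_le_Fin; [apply Rbar_inf_lb; exists b; auto|exact Hz].
Qed.

Lemma sigma_sup_ge_translate {Z : LCS} (A B : Z -> Prop) zs z b :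
  is_linear zs -> B b ->
  Rbar_le (Fin (- zs z)) (Rbar_minus_sup (sigma_sup A zs) (sigma_sup B zs)) ->
  Rbar_le (Fin (- zs (b ⊕ z))) (sigma_sup A zs).
Proof.
  intros Hzs Bb Hz.
  apply Rbar_le_trans with
    (Rbar_plus_sup (sigma_sup B zs) (Rbar_minus_sup (sigma_sup A zs) (sigma_sup B zs)));
    [|apply Rbar_minus_sup_spec].
  rewrite linear_add by exact Hzs. replace (- (zs b + zs z)) with (- zs b + - zs z) by ring.
  apply Rbar_plus_sup_ge_Fin; [apply Rbar_sup_ub; exists b; auto|exact Hz].
Qed.

Lemma set_diff_Q_inf {Z : LCS} (C A B : Z -> Prop) z :
  C θ -> convex_cone C -> (exists zs, Cminus C zs /\ zs <> (fun _ => 0)) -> in_Q_inf C A ->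
  set_diff A B z <->
  forall zs, Cminus C zs -> zs <> (fun _ => 0) ->
    Rbar_le (Rbar_minus_inf (sigma_inf A zs) (sigma_inf B zs)) (Fin (- zs z)).
Proof.
  intros C0 HC HCm HA. split.
  - intros Hz zs [[Hzs _] _] _. exact (set_diff_minus_sigma_inf A B zs z Hzs Hz).
  - intros Hz b Bb. apply NNPP. intros Hbz.
    destruct (Q_inf_separation C A _ C0 HC HCm HA Hbz) as (zs & Hzs & Hnz & Hsep).
    apply Hsep, (sigma_inf_le_translate A B); [apply Hzs|exact Bb|exact (Hz zs Hzs Hnz)].
Qed.

Lemma set_diff_Q_sup {Z : LCS} (C A B : Z -> Prop) z :
  C θ -> convex_cone C -> (exists zs, Cminus C zs /\ zs <> (fun _ => 0)) -> in_Q_sup C A ->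
  set_diff A B z <->
  forall zs, Cminus C zs -> zs <> (fun _ => 0) ->
    Rbar_le (Fin (- zs z)) (Rbar_minus_sup (sigma_sup A zs) (sigma_sup B zs)).
Proof.
  intros C0 HC HCm HA. split.
  - intros Hz zs [[Hzs _] _] _. exact (set_diff_minus_sigma_sup A B zs z Hzs Hz).
  - intros Hz b Bb. apply NNPP. intros Hbz.
    destruct (Q_sup_separation C A _ C0 HC HCm HA Hbz) as (zs & Hzs & Hnz & Hsep).
    apply Hsep, (sigma_sup_ge_translate A B); [apply Hzs|exact Bb|exact (Hz zs Hzs Hnz)].
Qed.

Lemma set_diff_halfspace_inf {Z : LCS} (A B : Z -> Prop) zs z :
  is_linear zs -> (forall z, A z <-> Rbar_le (sigma_inf A zs) (Fin (- zs z))) ->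
  set_diff A B z <-> Rbar_le (Rbar_minus_inf (sigma_inf A zs) (sigma_inf B zs)) (Fin (- zs z)).
Proof.
  intros Hzs HA. split.
  - exact (set_diff_minus_sigma_inf A B zs z Hzs).
  - intros Hz b Bb. apply HA. exact (sigma_inf_le_translate A B zs z b Hzs Bb Hz).
Qed.

Lemma set_diff_halfspace_sup {Z : LCS} (A B : Z -> Prop) zs z :
  is_linear zs -> (forall z, A z <-> Rbar_le (Fin (- zs z)) (sigma_sup A zs)) ->
  set_diff A B z <-> Rbar_le (Fin (- zs z)) (Rbar_minus_sup (sigma_sup A zs) (sigma_sup B zs)).
Proof.
  intros Hzs HA. split.
  - exact (set_diff_minus_sigma_sup A B zs z Hzs).
  - intros Hz b Bb. apply HA. exact (sigma_sup_ge_translate A B zs z b Hzs Bb Hz).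
Qed.

Theorem mainTheorem16 (Z : LCS) (C : Z -> Prop)
  (HC0 : C (zzero Z)) (HC : convex_cone C)
  (HCm : exists zs, Cminus C zs /\ zs <> (fun _ => 0)) :
  (forall A B : Z -> Prop, in_Q_inf C A -> in_Q_inf C B ->
     (forall z, set_diff A B z <->
        (forall zs, Cminus C zs -> zs <> (fun _ => 0) ->
           Rbar_le (Rbar_minus_inf (sigma_inf A zs) (sigma_inf B zs)) (Fin (- zs z)))) /\
     (forall zs, Cminus C zs -> zs <> (fun _ => 0) ->
        (forall z, A z <-> Rbar_le (sigma_inf A zs) (Fin (- zs z))) ->
        forall z, set_diff A B z <->
          Rbar_le (Rbar_minus_inf (sigma_inf A zs) (sigma_inf B zs)) (Fin (- zs z)))) /\
  (forall A B : Z -> Prop, in_Q_sup C A -> in_Q_sup C B ->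
     (forall z, set_diff A B z <->
        (forall zs, Cminus C zs -> zs <> (fun _ => 0) ->
           Rbar_le (Fin (- zs z)) (Rbar_minus_sup (sigma_sup A zs) (sigma_sup B zs)))) /\
     (forall zs, Cminus C zs -> zs <> (fun _ => 0) ->
        (forall z, A z <-> Rbar_le (Fin (- zs z)) (sigma_sup A zs)) ->
        forall z, set_diff A B z <->
          Rbar_le (Fin (- zs z)) (Rbar_minus_sup (sigma_sup A zs) (sigma_sup B zs)))).
Proof.
  (* only A needs to belong to the class Q; B is arbitrary *)
  split; intros A B HA _; split.
  - intros z. exact (set_diff_Q_inf C A B z HC0 HC HCm HA).
  - intros zs [[Hzs _] _] _ HAzs z. exact (set_diff_halfspace_inf A B zs z Hzs HAzs).
  - intros z. exact (set_diff_Q_sup C A B z HC0 HC HCm HA).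
  - intros zs [[Hzs _] _] _ HAzs z. exact (set_diff_halfspace_sup A B zs z Hzs HAzs).
Qed.
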